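(* Let $(\mathcal C,\otimes,\mathbb I)$ be a monoidal category with pushouts and $(H,\Delta,\varepsilon)$ a coalgebra in $\mathcal C$. Let $(X,X\bullet H,\pi_X,\rho_X)$ be a geometric partial $H$-comodule. Consider the free comodule $(X\otimes H,X\otimes\Delta)$ and the two parallel morphisms of $H$-comodules $$\rho_X\otimes H,\ \ (\pi_X\otimes H)\circ(X\otimes\Delta)\ :\ (X\otimes H,X\otimes\Delta)\longrightarrow ((X\bullet H)\otimes H,(X\bullet H)\otimes\Delta).$$ Then $X$ is globalizable if and only if (I) the equalizer $(Y_X,\kappa)$ of this pair exists in $\mathsf{Com}^H$, and (II) the commutative square formed by $(X\otimes\varepsilon)\circ\kappa:Y_X\to X$, $\kappa:Y_X\to X\otimes H$, $\rho_X:X\to X\bullet H$ and $\pi_X:X\otimes H\to X\bullet H$ is a pushout square in $\mathcal C$. Moreover, under these equivalent conditions, $Y_X$ (with $p=(X\otimes\varepsilon)\circ\kappa$) is the globalization of $X$, and $Y_X$ is co-generated by $X$ as a global $H$-comodule, i.e. $(p\otimes H)\circ\delta_{Y_X}:Y_X\to X\otimes H$ is a monomorphism in $\mathsf{Com}^H$, where $\delta_{Y_X}$ is the coaction of $Y_X$.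
   Context: $\mathcal C$ is treated as strict monoidal; the identity of an object $X$ is also written $X$ (so $X\otimes\varepsilon=\mathrm{id}_X\otimes\varepsilon$). $\mathsf{Com}^H$ is the category of right $H$-comodules $(Y,\delta)$, $\delta:Y\to Y\otimes H$. A partial comodule datum is $(X,X\bullet H,\pi_X,\rho_X)$ with morphisms $\rho_X:X\to X\bullet H$ and $\pi_X:X\otimes H\to X\bullet H$, $\pi_X$ an epimorphism. For such a datum let: $(X\bullet H)\bullet H$ be the pushout of $\pi_X$ and $\rho_X\otimes H:X\otimes H\to(X\bullet H)\otimes H$, with coprojections $\rho_X\bullet H:X\bullet H\to (X\bullet H)\bullet H$ and $\pi_{X\bullet H}:(X\bullet H)\otimes H\to(X\bullet H)\bullet H$; $X\bullet(H\otimes H)$ the pushout of $\pi_X$ and $X\otimes\Delta$, with coprojections $X\bullet\Delta:X\bullet H\to X\bullet(H\otimes H)$ and $\pi_{X,\Delta}:X\otimes H\otimes H\to X\bullet(H\otimes H)$; $X\bullet(H\bullet H)$ the pushout of $\pi_{X,\Delta}$ and $\pi_X\otimes H:X\otimes H\otimes H\to(X\bullet H)\otimes H$, with coprojections $\pi'_X:X\bullet(H\otimes H)\to X\bullet(H\bullet H)$ and $\pi'_{X,\Delta}:(X\bullet H)\otimes H\to X\bullet(H\bullet H)$. A geometric partial $H$-comodule is a datum such that (GP1) there is $X\bullet\varepsilon:X\bullet H\to X$ with $(X\bullet\varepsilon)\circ\rho_X=\mathrm{id}_X$ and $(X\bullet\varepsilon)\circ\pi_X=X\otimes\varepsilon$;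 (GP2) there is an isomorphism $\theta:X\bullet(H\bullet H)\to(X\bullet H)\bullet H$ with $\theta\circ\pi'_{X,\Delta}=\pi_{X\bullet H}$ and $(\rho_X\bullet H)\circ\rho_X=\theta\circ\pi'_X\circ(X\bullet\Delta)\circ\rho_X$. A morphism $X\to X'$ of geometric partial comodules is a pair $(f,f\bullet H)$ with $f:X\to X'$, $f\bullet H:X\bullet H\to X'\bullet H$, $\rho_{X'}\circ f=(f\bullet H)\circ\rho_X$ and $\pi_{X'}\circ(f\otimes H)=(f\bullet H)\circ\pi_X$. These form a category $\mathsf{PCom}^H$. A global comodule $(Y,\delta)$ gives the geometric partial comodule $\mathcal I(Y)=(Y,Y\otimes H,\mathrm{id},\delta)$; a morphism $\mathcal I(Y)\to X$ amounts to a morphism $g:Y\to X$ in $\mathcal C$ with $\pi_X\circ(g\otimes H)\circ\delta=\rho_X\circ g$. A globalization of a geometric partial comodule $X$ is a global comodule $(Y,\delta)$ with a morphism $p:Y\to X$ in $\mathcal C$ such that (GL1) $p$ is a morphism $\mathcal I(Y)\to X$; (GL2) $X\bullet H$ with $\rho_X,\pi_X$ is a pushout in $\mathcal C$ of $p:Y\to X$ and $(p\otimes H)\circ\delta:Y\to X\otimes H$; (GL3) for every global comodule $(Z,\delta')$ and every morphism $q:\mathcal I(Z)\to X$ of geometric partial comodules there is a unique comodule morphism $\eta:Z\to Y$ with $p\circ\eta=q$. $X$ is globalizable if a globalization exists. *)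

Set Implicit Arguments.
Unset Strict Implicit.

Record MonCat := {
  ob : Type;
  hom : ob -> ob -> Type;
  idm : forall a, hom a a;
  comp : forall a b c, hom b c -> hom a b -> hom a c;
  comp_idl : forall a b (f : hom a b), comp (idm b) f = f;
  comp_idr : forall a b (f : hom a b), comp f (idm a) = f;
  comp_assoc : forall a b c d (f : hom a b) (g : hom b c) (h : hom c d),
      comp h (comp g f) = comp (comp h g) f;
  tens : ob -> ob -> ob;
  tensm : forall a b c d, hom a b -> hom c d -> hom (tens a c) (tens b d);
  tensm_id : forall a b, tensm (idm a) (idm b) = idm (tens a b);
  tensm_comp : forall a b c a' b' c' (f : hom a b) (f' : hom b c)
      (g : hom a' b') (g' : hom b' c'),
      tensm (comp f' f) (comp g' g) = comp (tensm f' g') (tensm f g);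
  unit : ob;
  assoc : forall a b c, hom (tens (tens a b) c) (tens a (tens b c));
  assoc_inv : forall a b c, hom (tens a (tens b c)) (tens (tens a b) c);
  assoc_inv_l : forall a b c, comp (assoc_inv a b c) (assoc a b c) = idm _;
  assoc_inv_r : forall a b c, comp (assoc a b c) (assoc_inv a b c) = idm _;
  assoc_nat : forall a a' b b' c c' (f : hom a a') (g : hom b b') (h : hom c c'),
      comp (assoc a' b' c') (tensm (tensm f g) h)
      = comp (tensm f (tensm g h)) (assoc a b c);
  lunit : forall a, hom (tens unit a) a;
  lunit_inv : forall a, hom a (tens unit a);
  lunit_inv_l : forall a, comp (lunit_inv a) (lunit a) = idm _;
  lunit_inv_r : forall a, comp (lunit a) (lunit_inv a) = idm _;
  lunit_nat : forall a b (f : hom a b),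
      comp (lunit b) (tensm (idm unit) f) = comp f (lunit a);
  runit : forall a, hom (tens a unit) a;
  runit_inv : forall a, hom a (tens a unit);
  runit_inv_l : forall a, comp (runit_inv a) (runit a) = idm _;
  runit_inv_r : forall a, comp (runit a) (runit_inv a) = idm _;
  runit_nat : forall a b (f : hom a b),
      comp (runit b) (tensm f (idm unit)) = comp f (runit a);
  pentagon : forall a b c d,
      comp (assoc a b (tens c d)) (assoc (tens a b) c d)
      = comp (tensm (idm a) (assoc b c d))
             (comp (assoc a (tens b c) d) (tensm (assoc a b c) (idm d)));
  triangle : forall a b,
      comp (tensm (idm a) (lunit b)) (assoc a unit b)
      = tensm (runit a) (idm b)
}.

Arguments hom {m}.
Arguments idm {m}.
Arguments comp {m a b c}.
Arguments tens {m}.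
Arguments tensm {m a b c d}.
Arguments unit {m}.
Arguments assoc {m}.
Arguments assoc_inv {m}.
Arguments lunit {m}.
Arguments runit {m}.

Section Defs.
Variable C : MonCat.

Definition is_epi (a b : ob C) (f : hom a b) : Prop :=
  forall c (g h : hom b c), comp g f = comp h f -> g = h.

Definition is_pushout (a b c P : ob C) (f : hom a b) (g : hom a c)
    (i1 : hom b P) (i2 : hom c P) : Prop :=
  comp i1 f = comp i2 g /\
  forall d (u : hom b d) (v : hom c d), comp u f = comp v g ->
    exists h : hom P d, (comp h i1 = u /\ comp h i2 = v) /\
      forall h' : hom P d, comp h' i1 = u /\ comp h' i2 = v -> h' = h.

Definition pushouts : Type :=
  forall (a b c : ob C) (f : hom a b) (g : hom a c),
    { P : ob C & { i1 : hom b P & { i2 : hom c P | is_pushout f g i1 i2 } } }.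

Definition is_iso (a b : ob C) (f : hom a b) : Prop :=
  exists g : hom b a, comp g f = idm a /\ comp f g = idm b.

Definition is_coalgebra (H : ob C) (Delta : hom H (tens H H)) (eps : hom H unit)
  : Prop :=
  comp (assoc H H H) (comp (tensm Delta (idm H)) Delta)
    = comp (tensm (idm H) Delta) Delta /\
  comp (lunit H) (comp (tensm eps (idm H)) Delta) = idm H /\
  comp (runit H) (comp (tensm (idm H) eps) Delta) = idm H.

Section Comod.
Variables (H : ob C) (Delta : hom H (tens H H)) (eps : hom H unit).

Definition is_comodule (Y : ob C) (delta : hom Y (tens Y H)) : Prop :=
  comp (assoc Y H H) (comp (tensm delta (idm H)) delta)
    = comp (tensm (idm Y) Delta) delta /\
  comp (runit Y) (comp (tensm (idm Y) eps) delta) = idm Y.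

Definition is_comod_mor (Y Y' : ob C) (d : hom Y (tens Y H)) (d' : hom Y' (tens Y' H))
    (f : hom Y Y') : Prop :=
  comp d' f = comp (tensm f (idm H)) d.

(* the free (cofree) comodule structure on Z (x) H:  Z (x) Delta, up to the associator *)
Definition free_coaction (Z : ob C) : hom (tens Z H) (tens (tens Z H) H) :=
  comp (assoc_inv Z H H) (tensm (idm Z) Delta).

Definition is_comod_mono (Y Y' : ob C) (d : hom Y (tens Y H)) (d' : hom Y' (tens Y' H))
    (f : hom Y Y') : Prop :=
  forall (Z : ob C) (dZ : hom Z (tens Z H)), is_comodule dZ ->
  forall g h : hom Z Y, is_comod_mor dZ d g -> is_comod_mor dZ d h ->
    comp f g = comp f h -> g = h.

Definition is_comod_equalizer (A B : ob C) (dA : hom A (tens A H)) (dB : hom B (tens B H))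
    (f g : hom A B) (E : ob C) (dE : hom E (tens E H)) (k : hom E A) : Prop :=
  is_comodule dE /\ is_comod_mor dE dA k /\ comp f k = comp g k /\
  forall (Z : ob C) (dZ : hom Z (tens Z H)), is_comodule dZ ->
  forall q : hom Z A, is_comod_mor dZ dA q -> comp f q = comp g q ->
    exists u : hom Z E, (is_comod_mor dZ dE u /\ comp k u = q) /\
      forall u' : hom Z E, is_comod_mor dZ dE u' /\ comp k u' = q -> u' = u.

Section Partial.
(* partial comodule datum (X, XH = X \bullet H, piX, rhoX) *)
Variables (X XH : ob C) (piX : hom (tens X H) XH) (rhoX : hom X XH).

Definition GP1 : Prop :=
  exists e : hom XH X, comp e rhoX = idm X /\
    comp e piX = comp (runit X) (tensm (idm X) eps).

Definition GP2 (po : pushouts) : Prop :=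
  (* (X.H).H : pushout of piX and rhoX (x) H *)
  let P1 := po _ _ _ piX (tensm rhoX (idm H)) in
  let XHH := projT1 P1 in
  let rhoXH : hom XH XHH := projT1 (projT2 P1) in
  let piXH : hom (tens XH H) XHH := proj1_sig (projT2 (projT2 P1)) in
  (* X.(H(x)H) : pushout of piX and X (x) Delta *)
  let P2 := po _ _ _ piX (tensm (idm X) Delta) in
  let XHoH := projT1 P2 in
  let XDelta : hom XH XHoH := projT1 (projT2 P2) in
  let piXD : hom (tens X (tens H H)) XHoH := proj1_sig (projT2 (projT2 P2)) in
  (* X.(H.H) : pushout of piXD and piX (x) H  (sources identified via the associator) *)
  let P3 := po _ _ _ (comp piXD (assoc X H H)) (tensm piX (idm H)) in
  let XHbH := projT1 P3 in
  let pi' : hom XHoH XHbH := projT1 (projT2 P3) in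
  let pi'D : hom (tens XH H) XHbH := proj1_sig (projT2 (projT2 P3)) in
  exists theta : hom XHbH XHH, is_iso theta /\
    comp theta pi'D = piXH /\
    comp rhoXH rhoX = comp theta (comp pi' (comp XDelta rhoX)).

Definition geometric_partial_comodule (po : pushouts) : Prop :=
  is_epi piX /\ GP1 /\ GP2 po.

(* a morphism I(Y) -> X of geometric partial comodules, given by g : Y -> X *)
Definition is_mor_from_global (Y : ob C) (dY : hom Y (tens Y H)) (g : hom Y X) : Prop :=
  comp piX (comp (tensm g (idm H)) dY) = comp rhoX g.

Definition is_globalization (Y : ob C) (dY : hom Y (tens Y H)) (p : hom Y X) : Prop :=
  is_comodule dY /\
  is_mor_from_global dY p /\
  is_pushout p (comp (tensm p (idm H)) dY) rhoX piX /\
  (forall (Z : ob C) (dZ : hom Z (tens Z H)), is_comodule dZ ->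
   forall q : hom Z X, is_mor_from_global dZ q ->
     exists eta : hom Z Y, (is_comod_mor dZ dY eta /\ comp p eta = q) /\
       forall eta' : hom Z Y, is_comod_mor dZ dY eta' /\ comp p eta' = q -> eta' = eta).

Definition globalizable : Prop :=
  exists (Y : ob C) (dY : hom Y (tens Y H)) (p : hom Y X), is_globalization dY p.

End Partial.
End Comod.
End Defs.

(* The free comodule X ⊗ H is cofree: comodule maps Z → X ⊗ H correspond
   bijectively to morphisms Z → X, via q ↦ (q ⊗ H) ∘ δ_Z with inverse
   k ↦ (X ⊗ ε) ∘ k.  Under this bijection q is a morphism I(Z) → X exactly
   when its lift equalizes ρ_X ⊗ H and (π_X ⊗ H) ∘ (X ⊗ Δ).  So the
   universal property GL3 of (Y, p) says precisely that the lift of p is an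
   equalizer of that pair in Com^H, and GL2 then becomes condition (II).
   Co-generation holds because equalizers are monic. *)
Set Implicit Arguments.
Unset Strict Implicit.

Local Notation "g <o> f" := (comp g f) (at level 40, left associativity).

Section MonoidalFacts.
Variable C : MonCat.

Lemma tensm_compl (a b c d : ob C) (f : hom a b) (g : hom b c) :
  tensm (g <o> f) (idm d) = tensm g (idm d) <o> tensm f (idm d).
Proof. rewrite <- tensm_comp, comp_idl. reflexivity. Qed.

Lemma tensm_compr (a b c d : ob C) (f : hom a b) (g : hom b c) :
  tensm (idm d) (g <o> f) = tensm (idm d) g <o> tensm (idm d) f.
Proof. rewrite <- tensm_comp, comp_idl. reflexivity. Qed.

Lemma assoc_inv_nat (a a' b b' c c' : ob C) (f : hom a a') (g : hom b b') (h : hom c c') :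
  assoc_inv a' b' c' <o> tensm f (tensm g h) = tensm (tensm f g) h <o> assoc_inv a b c.
Proof.
  rewrite <- (comp_idr (assoc_inv a' b' c' <o> tensm f (tensm g h))).
  rewrite <- (assoc_inv_r a b c), comp_assoc, <- (comp_assoc _ _ (assoc_inv a' b' c')).
  rewrite <- assoc_nat, !comp_assoc, assoc_inv_l, comp_idl.
  reflexivity.
Qed.

Lemma triangle_inv (a b : ob C) :
  tensm (runit a) (idm b) <o> assoc_inv a unit b = tensm (idm a) (lunit b).
Proof. rewrite <- triangle, <- comp_assoc, assoc_inv_r, comp_idr. reflexivity. Qed.

End MonoidalFacts.

Section Cofree.
Variables (C : MonCat) (H : ob C) (Delta : hom H (tens H H)) (eps : hom H unit).
Hypothesis hH : is_coalgebra Delta eps.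

Definition tens_eps (A : ob C) : hom (tens A H) A := runit A <o> tensm (idm A) eps.

Definition cofree_lift (Z A : ob C) (dZ : hom Z (tens Z H)) (q : hom Z A) :
  hom Z (tens A H) := tensm q (idm H) <o> dZ.

Lemma tens_eps_nat (A B : ob C) (f : hom A B) :
  tens_eps B <o> tensm f (idm H) = f <o> tens_eps A.
Proof.
  unfold tens_eps.
  assert (swap : tensm (idm B) eps <o> tensm f (idm H)
                 = tensm f (idm unit) <o> tensm (idm A) eps).
  { transitivity (tensm f eps); rewrite <- tensm_comp, comp_idl, comp_idr; reflexivity. }
  rewrite <- comp_assoc, swap, comp_assoc, runit_nat, comp_assoc.
  reflexivity.
Qed.

Lemma tens_eps_free_coaction (A : ob C) :
  tensm (tens_eps A) (idm H) <o> free_coaction Delta A = idm (tens A H).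
Proof.
  destruct hH as [_ [lcounit _]].
  unfold tens_eps, free_coaction.
  rewrite tensm_compl, <- !comp_assoc, (comp_assoc _ (assoc_inv A H H)), <- assoc_inv_nat.
  rewrite !comp_assoc, triangle_inv, <- !tensm_compr, <- comp_assoc, lcounit.
  apply tensm_id.
Qed.

Lemma free_coaction_nat (A B : ob C) (f : hom A B) :
  free_coaction Delta B <o> tensm f (idm H)
  = tensm (tensm f (idm H)) (idm H) <o> free_coaction Delta A.
Proof.
  unfold free_coaction.
  rewrite <- comp_assoc, <- tensm_comp, comp_idl, comp_idr, comp_assoc, <- assoc_inv_nat.
  rewrite tensm_id, <- comp_assoc, <- tensm_comp, comp_idl, comp_idr.
  reflexivity.
Qed.

Lemma comod_mor_comp (A B D : ob C) (dA : hom A (tens A H)) (dB : hom B (tens B H))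
    (dD : hom D (tens D H)) (f : hom A B) (g : hom B D) :
  is_comod_mor dA dB f -> is_comod_mor dB dD g -> is_comod_mor dA dD (g <o> f).
Proof.
  unfold is_comod_mor. intros hf hg.
  rewrite comp_assoc, hg, <- comp_assoc, hf, tensm_compl, comp_assoc.
  reflexivity.
Qed.

Lemma tensm_cofree_lift (Z A B : ob C) (dZ : hom Z (tens Z H)) (q : hom Z A)
    (g : hom A B) :
  tensm g (idm H) <o> cofree_lift dZ q = cofree_lift dZ (g <o> q).
Proof. unfold cofree_lift. rewrite tensm_compl, comp_assoc. reflexivity. Qed.

Lemma cofree_lift_comp (Z Y A : ob C) (dZ : hom Z (tens Z H)) (dY : hom Y (tens Y H))
    (eta : hom Z Y) (p : hom Y A) :
  is_comod_mor dZ dY eta -> cofree_lift dY p <o> eta = cofree_lift dZ (p <o> eta).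
Proof.
  unfold is_comod_mor, cofree_lift. intros heta.
  rewrite <- comp_assoc, heta, tensm_compl, comp_assoc.
  reflexivity.
Qed.

Lemma cofree_lift_tens_eps (Z A : ob C) (dZ : hom Z (tens Z H)) (k : hom Z (tens A H)) :
  is_comod_mor dZ (free_coaction Delta A) k -> cofree_lift dZ (tens_eps A <o> k) = k.
Proof.
  unfold is_comod_mor, cofree_lift. intros hk.
  rewrite tensm_compl, <- comp_assoc, <- hk, comp_assoc, tens_eps_free_coaction.
  apply comp_idl.
Qed.

Section Comodule.
Variables (Z : ob C) (dZ : hom Z (tens Z H)).
Hypothesis hZ : is_comodule Delta eps dZ.

Lemma comodule_counit : tens_eps Z <o> dZ = idm Z.
Proof. destruct hZ as [_ counit]. unfold tens_eps. rewrite <- comp_assoc. exact counit. Qed.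

Lemma comodule_coassoc : tensm dZ (idm H) <o> dZ = free_coaction Delta Z <o> dZ.
Proof.
  destruct hZ as [coassoc _]. unfold free_coaction.
  rewrite <- comp_assoc, <- coassoc, !comp_assoc, assoc_inv_l, comp_idl.
  reflexivity.
Qed.

Lemma tens_eps_cofree_lift (A : ob C) (q : hom Z A) : tens_eps A <o> cofree_lift dZ q = q.
Proof.
  unfold cofree_lift.
  rewrite comp_assoc, tens_eps_nat, <- comp_assoc, comodule_counit.
  apply comp_idr.
Qed.

Lemma cofree_lift_inj (A : ob C) (q q' : hom Z A) :
  cofree_lift dZ q = cofree_lift dZ q' -> q = q'.
Proof.
  intros e. rewrite <- (tens_eps_cofree_lift q), <- (tens_eps_cofree_lift q'), e.
  reflexivity.
Qed.

Lemma cofree_lift_comod_mor (A : ob C) (q : hom Z A) :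
  is_comod_mor dZ (free_coaction Delta A) (cofree_lift dZ q).
Proof.
  unfold is_comod_mor, cofree_lift.
  rewrite comp_assoc, free_coaction_nat, <- comp_assoc, <- comodule_coassoc.
  rewrite tensm_compl, comp_assoc.
  reflexivity.
Qed.

End Comodule.

Lemma comod_equalizer_mono (A B E : ob C) (dA : hom A (tens A H)) (dB : hom B (tens B H))
    (f g : hom A B) (dE : hom E (tens E H)) (k : hom E A) :
  is_comod_equalizer Delta eps dA dB f g dE k -> is_comod_mono Delta eps dE dA k.
Proof.
  intros [_ [hk [hfk U]]] Z dZ hZ u v hu hv huv.
  assert (hku : is_comod_mor dZ dA (k <o> u)) by exact (comod_mor_comp hu hk).
  assert (hfku : f <o> (k <o> u) = g <o> (k <o> u)) by (rewrite !comp_assoc, hfk; reflexivity).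
  destruct (U Z dZ hZ _ hku hfku) as [w [_ uniq]].
  rewrite (uniq u), (uniq v); auto.
Qed.

Section Globalization.
Variables (X XH : ob C) (piX : hom (tens X H) XH) (rhoX : hom X XH).

Definition rho_H : hom (tens X H) (tens XH H) := tensm rhoX (idm H).

Definition pi_Delta : hom (tens X H) (tens XH H) :=
  tensm piX (idm H) <o> free_coaction Delta X.

Lemma mor_from_global_iff_equalizes (Z : ob C) (dZ : hom Z (tens Z H)) (q : hom Z X) :
  is_comodule Delta eps dZ ->
  is_mor_from_global piX rhoX dZ q
  <-> rho_H <o> cofree_lift dZ q = pi_Delta <o> cofree_lift dZ q.
Proof.
  intros hZ.
  unfold is_mor_from_global, rho_H, pi_Delta.
  change (tensm q (idm H) <o> dZ) with (cofree_lift dZ q).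
  rewrite <- comp_assoc, (cofree_lift_comod_mor hZ q).
  change (tensm (cofree_lift dZ q) (idm H) <o> dZ) with (cofree_lift dZ (cofree_lift dZ q)).
  rewrite !tensm_cofree_lift.
  split.
  - intros e. rewrite e. reflexivity.
  - intros e. symmetry. exact (cofree_lift_inj hZ e).
Qed.

Lemma globalization_comod_equalizer (Y : ob C) (dY : hom Y (tens Y H)) (p : hom Y X) :
  is_globalization Delta eps piX rhoX dY p ->
  is_comod_equalizer Delta eps (free_coaction Delta X) (free_coaction Delta XH)
    rho_H pi_Delta dY (cofree_lift dY p).
Proof.
  intros [hY [GL1 [_ GL3]]].
  split; [exact hY|]. split; [exact (cofree_lift_comod_mor hY p)|].
  split; [exact (proj1 (mor_from_global_iff_equalizes p hY) GL1)|].
  intros Z dZ hZ k hk hfk.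
  rewrite <- (cofree_lift_tens_eps hk) in hfk |- *.
  apply (mor_from_global_iff_equalizes _ hZ) in hfk.
  destruct (GL3 Z dZ hZ _ hfk) as [eta [[heta hpeta] uniq]].
  exists eta. split.
  - split; [exact heta|]. rewrite (cofree_lift_comp _ heta), hpeta. reflexivity.
  - intros eta' [heta' hpeta']. apply uniq. split; [exact heta'|].
    rewrite (cofree_lift_comp _ heta') in hpeta'. exact (cofree_lift_inj hZ hpeta').
Qed.

Lemma comod_equalizer_globalization (Y : ob C) (dY : hom Y (tens Y H))
    (k : hom Y (tens X H)) :
  is_comod_equalizer Delta eps (free_coaction Delta X) (free_coaction Delta XH)
    rho_H pi_Delta dY k ->
  is_pushout (tens_eps X <o> k) k rhoX piX ->
  is_globalization Delta eps piX rhoX dY (tens_eps X <o> k).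
Proof.
  intros [hY [hk [hfk U]]] P.
  assert (hlift : cofree_lift dY (tens_eps X <o> k) = k) by exact (cofree_lift_tens_eps hk).
  split; [exact hY|]. split; [|split].
  - apply (mor_from_global_iff_equalizes _ hY). rewrite hlift. exact hfk.
  - change (is_pushout (tens_eps X <o> k) (cofree_lift dY (tens_eps X <o> k)) rhoX piX).
    rewrite hlift. exact P.
  - intros Z dZ hZ q hq.
    apply (mor_from_global_iff_equalizes _ hZ) in hq.
    destruct (U Z dZ hZ _ (cofree_lift_comod_mor hZ q) hq) as [u [[hu hku] uniq]].
    exists u. split.
    + split; [exact hu|]. apply (cofree_lift_inj hZ).
      rewrite <- (cofree_lift_comp _ hu), hlift. exact hku.
    + intros u' [hu' hpu']. apply uniq. split; [exact hu'|].
      rewrite <- hlift, (cofree_lift_comp _ hu'), hpu'. reflexivity.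
Qed.

End Globalization.
End Cofree.

Theorem theorem3p5 (C : MonCat) (po : pushouts C)
    (H : ob C) (Delta : hom H (tens H H)) (eps : hom H unit)
    (hH : is_coalgebra Delta eps)
    (X XH : ob C) (piX : hom (tens X H) XH) (rhoX : hom X XH)
    (hX : geometric_partial_comodule Delta eps piX rhoX po) :
  let f1 : hom (tens X H) (tens XH H) := tensm rhoX (idm H) in
  let f2 : hom (tens X H) (tens XH H) :=
    comp (tensm piX (idm H)) (comp (assoc_inv X H H) (tensm (idm X) Delta)) in
  (globalizable Delta eps piX rhoX <->
     exists (Y : ob C) (dY : hom Y (tens Y H)) (k : hom Y (tens X H)),
       (* (I) *)
       is_comod_equalizer Delta eps (free_coaction Delta X) (free_coaction Delta XH)
         f1 f2 dY k /\
       (* (II) *)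
       is_pushout (comp (comp (runit X) (tensm (idm X) eps)) k) k rhoX piX) /\
  (forall (Y : ob C) (dY : hom Y (tens Y H)) (k : hom Y (tens X H)),
     is_comod_equalizer Delta eps (free_coaction Delta X) (free_coaction Delta XH)
       f1 f2 dY k ->
     is_pushout (comp (comp (runit X) (tensm (idm X) eps)) k) k rhoX piX ->
     let p := comp (runit X) (tensm (idm X) eps) in
     let p' := comp p k in
     is_globalization Delta eps piX rhoX dY p' /\
     is_comod_mor dY (free_coaction Delta X) (comp (tensm p' (idm H)) dY) /\
     is_comod_mono Delta eps dY (free_coaction Delta X) (comp (tensm p' (idm H)) dY)).
Proof.
  intros f1 f2.
  split; [split|].
  - intros [Y [dY [p G]]].
    exists Y, dY, (cofree_lift dY p). split.
    + exact (globalization_comod_equalizer hH G).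
    + destruct G as [hY [_ [GL2 _]]].
      change (is_pushout (tens_eps eps X <o> cofree_lift dY p) (cofree_lift dY p) rhoX piX).
      rewrite (tens_eps_cofree_lift hY). exact GL2.
  - intros [Y [dY [k [E P]]]].
    exists Y, dY, (tens_eps eps X <o> k). exact (comod_equalizer_globalization hH E P).
  - intros Y dY k E P p p'.
    assert (hlift : tensm p' (idm H) <o> dY = k)
      by exact (cofree_lift_tens_eps hH (proj1 (proj2 E))).
    rewrite hlift.
    split; [exact (comod_equalizer_globalization hH E P)|].
    split; [exact (proj1 (proj2 E)) | exact (comod_equalizer_mono E)].
Qed.
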